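(* Let $\mu_c$ be the 1-D Gaussian mixture below with $p=1/2$ and $\sigma_1=\sigma_2=\sigma$, and let $u>0$ with $|\gamma_1+\gamma_2|\le 2u$. For $\epsilon>0$ consider $$\max_{\mu_p\in\mathcal{Q}(u)}\big[L(h_{1,b_p};\mu_c)+\epsilon L(h_{1,b_p};\mu_p)\big],\qquad b_p=\arg\min_{b\in\mathbb{R}}\big[L(h_{1,b};\mu_c)+\epsilon L(h_{1,b};\mu_p)\big].$$ Then there exists $\alpha\in[0,1]$ such that the optimal value of this problem is attained at $\mu_p=\nu_\alpha$.
   Context: Data model: $(x,y)\in\mathbb{R}\times\{-1,+1\}$ with $y=-1,\ x\sim\mathcal{N}(\gamma_1,\sigma_1^2)$ with probability $p$, and $y=+1,\ x\sim\mathcal{N}(\gamma_2,\sigma_2^2)$ with probability $1-p$. $h_{w,b}(x)=\mathrm{sgn}(wx+b)$ with $w\in\{-1,1\}$, $b\in\mathbb{R}$. Hinge loss $\ell(h_{w,b};x,y)=\max\{0,1-y(wx+b)\}$; $L(h;\mu)=\mathbb{E}_\mu[\ell(h;x,y)]$. $\mathcal{Q}(u)$ is the set of distributions supported on $[-u,u]\times\{-1,+1\}$. Two-point distribution $\nu_\alpha$: $(x,y)=(-u,+1)$ with probability $\alpha$ and $(u,-1)$ with probability $1-\alpha$. *)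

From HB Require Import structures.
From mathcomp Require Import all_boot all_order all_algebra.
From mathcomp Require Import all_classical all_reals all_analysis.
Set Implicit Arguments. Unset Strict Implicit. Unset Printing Implicit Defensive.
Import Order.TTheory GRing.Theory Num.Theory.
Local Open Scope classical_set_scope.
Local Open Scope ring_scope.

Section defs.
Context {R : realType}.

(* hinge loss of h_{w,b}(x) = sgn(w x + b) at the labelled point z = (x, y) *)
Definition hinge (w b : R) (z : R * R) : R := Num.max 0 (1 - z.2 * (w * z.1 + b)).

Definition Lmu (mu : probability (R * R)%type R) (w b : R) : \bar R :=
  (\int[mu]_z (hinge w b z)%:E)%E.

(* L(h_{w,b}; mu_c) for the Gaussian mixture mu_c :
   y = -1, x ~ N(g1, s1^2) w.p. p ;  y = +1, x ~ N(g2, s2^2) w.p. 1-p *)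
Definition Lmix (p g1 g2 s1 s2 w b : R) : \bar R :=
  (p%:E * (\int[normal_prob g1 s1]_x (hinge w b (x, -1)%R)%:E) +
   (1 - p)%R%:E * (\int[normal_prob g2 s2]_x (hinge w b (x, 1)%R)%:E))%E.

Definition inQ (u : R) (mu : probability (R * R)%type R) : Prop :=
  mu ([set z | -u <= z.1 <= u /\ (z.2 = -1 \/ z.2 = 1)]) = 1%E.

Definition is_nu (u alpha : R) (nu : probability (R * R)%type R) : Prop :=
  forall A, measurable A ->
    nu A = (alpha%:E * \d_((-u, 1)%R : R * R) A + (1 - alpha)%R%:E * \d_((u, -1)%R : R * R) A)%E.

Definition Jobj (g1 g2 s eps : R) (mu : probability (R * R)%type R) (b : R) : \bar R :=
  (Lmix (2^-1)%R g1 g2 s s 1 b + eps%:E * Lmu mu 1 b)%E.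

Definition is_argmin (f : R -> \bar R) (b : R) : Prop := forall b', (f b <= f b')%E.

End defs.

From HB Require Import structures.
From mathcomp Require Import all_boot all_order all_algebra.
From mathcomp Require Import all_classical all_reals all_analysis.
From mathcomp Require Import ring lra measurable_realfun.
Set Implicit Arguments. Unset Strict Implicit. Unset Printing Implicit Defensive.
Import Order.TTheory GRing.Theory Num.Theory.
Import numFieldNormedType.Exports.
Local Open Scope classical_set_scope.
Local Open Scope ring_scope.

(* Write a b for the Gaussian-mixture risk L(h_{1,b}; mu_c).  On [-u, u] x {-1, +1}
   the hinge loss of h_{1,b} at a point of label +1 (resp. -1) is at most its value
   at (-u, +1) (resp. (u, -1)), so every mu in Q(u) loses at most what nu_p loses,
   p being the mass of mu on the label +1.  It is therefore enough to find a saddle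
   point (alpha, b* ) of F(alpha, b) = a b + eps L(h_{1,b}; nu_alpha), i.e. b*
   minimises F(alpha, .) while alpha maximises F(., b* ).
   The risk a is convex, nonnegative and 1-Lipschitz, hence the upper envelope
   max_alpha F(alpha, b) = a b + eps (1 + u + |b|) is coercive and has a minimiser
   b*.  If b* <> 0, the extreme alpha in {0, 1} matching the sign of b* works by
   convexity; if b* = 0, a subgradient s of a at 0 satisfies |s| <= eps and
   alpha = (1 + s / eps) / 2 works.  When the Gaussian risk is infinite, every
   objective is +oo and any nu_alpha does. *)

Section real_functions.
Context {R : realType}.

Definition lipschitz1 (f : R -> R) := forall x y, f y <= f x + `|x - y|.

Definition convex_fun (f : R -> R) := forall x y t, 0 <= t <= 1 ->
  f (t * x + (1 - t) * y) <= t * f x + (1 - t) * f y.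

Definition nonneg_convex_lipschitz1 (f : R -> R) :=
  [/\ forall b, 0 <= f b, lipschitz1 f & convex_fun f].

Lemma max0_lipschitz1 : lipschitz1 (Num.max 0).
Proof.
move=> x y.
have x0 : 0 <= Num.max 0 x by rewrite le_max lexx.
have xm : x <= Num.max 0 x by rewrite le_max lexx orbT.
have := normr_ge0 (x - y); have := ler_norm (y - x); rewrite distrC.
by rewrite ge_max => hn hn0; apply/andP; split; lra.
Qed.

Lemma max0_convex : convex_fun (Num.max 0).
Proof.
move=> x y t /andP[t0 t1].
have mx0 (z : R) : 0 <= Num.max 0 z /\ z <= Num.max 0 z by split; rewrite le_max lexx ?orbT.
have [x0 xm] := mx0 x; have [y0 ym] := mx0 y.
rewrite ge_max; apply/andP; split; first by rewrite addr_ge0 // mulr_ge0 //; lra.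
by rewrite lerD // ler_wpM2l //; lra.
Qed.

Lemma convex_funD f g : convex_fun f -> convex_fun g -> convex_fun (f \+ g).
Proof.
move=> cf cg x y t t01 /=.
by rewrite (le_trans (lerD (cf x y t t01) (cg x y t t01))) //; lra.
Qed.

Lemma convex_funZ k f : 0 <= k -> convex_fun f -> convex_fun (fun x => k * f x).
Proof.
move=> k0 cf x y t t01; have := ler_wpM2l k0 (cf x y t t01).
by rewrite mulrDr !mulrA ![k * _]mulrC -!mulrA.
Qed.

Lemma convex_fun_affine_comp f k m : convex_fun f -> convex_fun (fun x => f (m + k * x)).
Proof.
move=> cf x y t t01.
have -> : m + k * (t * x + (1 - t) * y) = t * (m + k * x) + (1 - t) * (m + k * y) by ring.
exact: cf.
Qed.

Lemma nonneg_convex_lipschitz1_conv p f g : 0 <= p <= 1 ->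
  nonneg_convex_lipschitz1 f -> nonneg_convex_lipschitz1 g ->
  nonneg_convex_lipschitz1 (fun b => p * f b + (1 - p) * g b).
Proof.
move=> /andP[p0 p1] [f0 flip fcvx] [g0 glip gcvx]; have q0 : 0 <= 1 - p by lra.
split => [b|x y|].
- by rewrite addr_ge0 // mulr_ge0.
- have := ler_wpM2l p0 (flip x y); have := ler_wpM2l q0 (glip x y); nra.
- by apply: convex_funD; apply: convex_funZ.
Qed.

(* A convex function that is minimal at [m] along the half-line of points
   of the sign of [m] is minimal everywhere: any other [b] sees [m / 2] on the
   chord from [b] to [m]. *)
Lemma convex_halfline_min f m : convex_fun f ->
  (forall b, 0 <= b * m -> f m <= f b) -> forall b, f m <= f b.
Proof.
move=> cf fmin b; have [bm|bm] := leP 0 (b * m); first exact: fmin.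
have m0 : m != 0 by apply: contraTneq bm => ->; rewrite mulr0 ltxx.
have m2 : 0 < m * m by rewrite -expr2 lt0r sqrf_eq0 m0 sqr_ge0.
have mb0 : 0 < 2 * (m * (m - b)) by nra.
set t := m * m / (2 * (m * (m - b))).
have t0 : 0 < t by rewrite divr_gt0.
have t1 : t <= 1 by rewrite ler_pdivrMr // mul1r; nra.
have tE : t * b + (1 - t) * m = m / 2.
  have mbn : m - b != 0 by apply: contraTneq mb0 => ->; rewrite !mulr0 ltxx.
  by rewrite /t; field; rewrite mbn m0.
have := cf b m t ltac:(lra); rewrite tE => hchord.
have := fmin (m / 2) ltac:(by rewrite mulrAC mulr_ge0 // ltW).
move=> hhalf; rewrite -(ler_pM2l t0); lra.
Qed.

Lemma klipschitz_continuous (f : R -> R) K : 0 < K ->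
  (forall x y, `|f x - f y| <= K * `|x - y|) -> continuous f.
Proof.
move=> K0 fK x; apply/cvgrPdist_lt => e e0.
have Ke : 0 < K^-1 * e by rewrite mulr_gt0 // invr_gt0.
near=> y; apply: (le_lt_trans (fK x y)).
rewrite -ltr_pdivlMl; last by [].
near: y.
exact: (@cvgr_dist_lt _ _ _ (nbhs x) _ id x (@cvg_id _ (nbhs x)) _ Ke).
Unshelve. all: by end_near.
Qed.

Lemma continuous_coercive_min (f : R -> R) M : 0 <= M -> continuous f ->
  (forall b, M < `|b| -> f 0 < f b) -> exists bs, forall b, f bs <= f b.
Proof.
move=> M0 fc fcoer.
have [bs _ bs_min] := @EVT_min R f (- M) M ltac:(lra) (continuous_subspaceT fc).
exists bs => b; have [bM|bM] := leP `|b| M.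
  by apply: bs_min; rewrite in_itv /= -ler_norml.
apply: (le_trans (bs_min 0 _)); last exact/ltW/fcoer.
by rewrite in_itv /=; lra.
Qed.

Lemma convex_slope_le (f : R -> R) b x d : convex_fun f -> b < x < d ->
  (f b - f x) / (b - x) <= (f d - f x) / (d - x).
Proof.
move=> cf /andP[bx xd].
set t := (d - x) / (d - b).
have db : 0 < d - b by lra.
have t01 : 0 <= t <= 1.
  by rewrite divr_ge0 ?ler_pdivrMr //=; lra.
have tE : t * b + (1 - t) * d = x by rewrite /t; field; rewrite gt_eqF.
have := cf b d t t01; rewrite tE => hx.
have {}hx : (d - x) * (f b - f x) + (x - b) * (f d - f x) >= 0.
  have -> : (d - x) * (f b - f x) + (x - b) * (f d - f x) =
            (d - b) * (t * f b + (1 - t) * f d - f x).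
    by rewrite /t; field; rewrite gt_eqF.
  by rewrite mulr_ge0 //; lra.
rewrite -mulrNN -invrN opprB ler_pdivrMr; last lra.
rewrite mulrAC ler_pdivlMr; last lra.
nra.
Qed.

(* The left chord slopes at [x] are below all right chord slopes (convex_slope_le);
   their supremum, clamped below by [-L], is a subgradient. *)
Lemma convex_subgradient (f : R -> R) x L : 0 <= L -> convex_fun f ->
  (forall b, f x <= f b + L * `|b - x|) ->
  exists s, `|s| <= L /\ forall b, f x + s * (b - x) <= f b.
Proof.
move=> L0 cf fxL.
pose slope b := (f b - f x) / (b - x).
have slopeE b : b != x -> slope b * (b - x) = f b - f x.
  by move=> bx; rewrite /slope divfK // subr_eq0.
have slope_left b : b < x -> slope b <= L.
  move=> bx; have := fxL b; rewrite ltr0_norm ?subr_lt0 //.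
  have := slopeE b (negbT (lt_eqF bx)); nra.
have slope_right d : x < d -> - L <= slope d.
  move=> xd; have := fxL d; rewrite gtr0_norm ?subr_gt0 //.
  have := slopeE d (negbT (gt_eqF xd)); nra.
pose E := [set slope b | b in [set b | b < x]].
have En : E !=set0 by exists (slope (x - 1)); exists (x - 1) => //=; lra.
have EL : ubound E L by move=> _ [b bx <-]; exact: slope_left.
have Esup b : b < x -> slope b <= sup E.
  by move=> bx; apply: ub_le_sup; [exists L | exists b].
have supE d : x < d -> sup E <= slope d.
  by move=> xd; apply: ge_sup => // _ [b bx <-]; apply: convex_slope_le => //; apply/andP.
exists (Num.max (sup E) (- L)); split.
  rewrite ler_norml le_max lexx orbT ge_max ge_sup //=; lra.
move=> b; have [bx|xb|->] := ltgtP b x; last by rewrite subrr mulr0 addr0.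
- have := slopeE b (negbT (lt_eqF bx)); have : slope b <= Num.max (sup E) (- L).
    by rewrite le_max Esup.
  nra.
- have := slopeE b (negbT (gt_eqF xb)); have : Num.max (sup E) (- L) <= slope b.
    by rewrite ge_max supE //= slope_right.
  nra.
Qed.

End real_functions.

Section two_point_saddle.
Context {R : realType}.

Definition two_point_loss (c al b : R) :=
  al * Num.max 0 (c - b) + (1 - al) * Num.max 0 (c + b).

Lemma two_point_loss_le c al b : 0 <= c -> 0 <= al <= 1 ->
  two_point_loss c al b <= c + `|b|.
Proof.
move=> c0 /andP[al0 al1].
have nb := normr_ge0 b; have := ler_norm b; have := ler_norm (- b); rewrite normrN.
move=> hnb hb; have h1 : Num.max 0 (c - b) <= c + `|b|.
  by rewrite ge_max; apply/andP; split; lra.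
have h2 : Num.max 0 (c + b) <= c + `|b|.
  by rewrite ge_max; apply/andP; split; lra.
rewrite /two_point_loss; nra.
Qed.

Lemma two_point_loss_ge_affine c al b : 0 <= al <= 1 ->
  c + (1 - 2 * al) * b <= two_point_loss c al b.
Proof.
move=> /andP[al0 al1].
have h1 : c - b <= Num.max 0 (c - b) by rewrite le_max lexx orbT.
have h2 : c + b <= Num.max 0 (c + b) by rewrite le_max lexx orbT.
rewrite /two_point_loss; nra.
Qed.

Lemma two_point_loss0 c al : 0 <= c -> two_point_loss c al 0 = c.
Proof.
by move=> c0; rewrite /two_point_loss subr0 addr0 max_r //; ring.
Qed.

Lemma two_point_loss_sign c m b : 0 <= c -> m != 0 -> 0 <= b * m ->
  two_point_loss c (if 0 < m then 0 else 1) b = c + `|b|.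
Proof.
move=> c0 m0 bm; rewrite /two_point_loss.
have [m_gt0|m_le0] := ltP 0 m.
  have b0 : 0 <= b by rewrite -(pmulr_lge0 _ m_gt0).
  by rewrite mul0r add0r subr0 mul1r ger0_norm // max_r //; lra.
have m_lt0 : m < 0 by rewrite lt_neqAle m0.
have b0 : b <= 0 by rewrite -(nmulr_lge0 _ m_lt0).
by rewrite mul1r subrr mul0r addr0 ler0_norm // max_r //; lra.
Qed.

Lemma convex_two_point_loss c al : 0 <= al <= 1 -> convex_fun (two_point_loss c al).
Proof.
move=> /andP[al0 al1].
have -> : two_point_loss c al = (fun b => al * Num.max 0 (c + -1 * b)) \+
                                (fun b => (1 - al) * Num.max 0 (c + 1 * b)).
  by apply: funext => b; rewrite /two_point_loss /= mulN1r mul1r.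
apply: convex_funD; apply: convex_funZ; rewrite ?subr_ge0 //;
  exact: convex_fun_affine_comp max0_convex.
Qed.

Variables (a : R -> R) (eps c : R).
Hypotheses (eps_gt0 : 0 < eps) (c_ge0 : 0 <= c) (a_ok : nonneg_convex_lipschitz1 a).

Lemma envelope_has_min : exists bs, forall b,
  a bs + eps * (c + `|bs|) <= a b + eps * (c + `|b|).
Proof.
case: a_ok => a0 alip _.
have env_lip x y : `|a x + eps * (c + `|x|) - (a y + eps * (c + `|y|))| <= (1 + eps) * `|x - y|.
  have h3 := alip x y; have h4 := alip y x; rewrite distrC in h4.
  have := ler_dist_dist x y; rewrite ler_norml => /andP[h1 h2].
  have h5 := ler_wpM2l (ltW eps_gt0) h2.
  have h6 := ler_wpM2l (ltW eps_gt0) h1.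
  rewrite ler_norml; apply/andP; split; nra.
have env0 : 0 <= a 0 + eps * c by rewrite addr_ge0 // mulr_ge0 // ltW.
apply: (@continuous_coercive_min _ _ ((a 0 + eps * c) / eps)).
- by rewrite divr_ge0 // ltW.
- by apply: (klipschitz_continuous _ env_lip); rewrite addr_gt0.
- move=> b hb /=; rewrite normr0 addr0.
  have hb' : a 0 + eps * c < eps * `|b| by rewrite [eps * `|b|]mulrC -ltr_pdivrMr.
  have := a0 b; have := mulr_ge0 (ltW eps_gt0) c_ge0; lra.
Qed.

Theorem two_point_saddle : exists al, 0 <= al <= 1 /\ exists bs,
  (forall b, a bs + eps * two_point_loss c al bs <= a b + eps * two_point_loss c al b) /\
  (forall al', 0 <= al' <= 1 -> two_point_loss c al' bs <= two_point_loss c al bs).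
Proof.
have [bs bs_min] := envelope_has_min; case: (a_ok) => _ _ a_cvx.
case: (eqVneq bs 0) bs_min => [->|bs0] bs_min.
  have a0_le b : a 0 <= a b + eps * `|b - 0|.
    by have := bs_min b; rewrite normr0 addr0 subr0; nra.
  have [s [sL s_sub]] := convex_subgradient (ltW eps_gt0) a_cvx a0_le.
  move: sL; rewrite ler_norml => /andP[sL1 sL2].
  have q1 : -1 <= s / eps by rewrite ler_pdivlMr // mulN1r.
  have q2 : s / eps <= 1 by rewrite ler_pdivrMr // mul1r.
  have al01 : 0 <= (1 + s / eps) / 2 <= 1 by apply/andP; split; lra.
  exists ((1 + s / eps) / 2); split => //; exists 0; split; last first.
    by move=> al' _; rewrite !two_point_loss0.
  move=> b; rewrite two_point_loss0 //.
  have := ler_wpM2l (ltW eps_gt0) (two_point_loss_ge_affine c b al01).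
  have -> : eps * (c + (1 - 2 * ((1 + s / eps) / 2)) * b) = eps * c - s * b.
    by field; rewrite gt_eqF.
  have := s_sub b; rewrite subr0; lra.
have bs_sq : 0 <= bs * bs by rewrite -expr2 sqr_ge0.
pose al : R := if 0 < bs then 0 else 1.
have al01 : 0 <= al <= 1 by rewrite /al; case: ifP; rewrite lexx ler01.
exists al; split => //; exists bs; split; last first.
  by move=> al' al'01; rewrite two_point_loss_sign // two_point_loss_le.
apply: (@convex_halfline_min _ (a \+ (fun b => eps * two_point_loss c al b))) => [|b b_bs].
  apply: convex_funD => //; apply: convex_funZ; first exact: ltW.
  exact: convex_two_point_loss.
by rewrite /= !two_point_loss_sign //; exact: bs_min.
Qed.

End two_point_saddle.

Section hinge_risk.
Context {R : realType}.

Lemma measurable_hinge d (T : measurableType d) (f1 f2 : T -> R) (b : R) :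
  measurable_fun setT f1 -> measurable_fun setT f2 ->
  measurable_fun setT (fun z => hinge 1 b (f1 z, f2 z)).
Proof.
move=> m1 m2.
have : measurable_fun setT ((cst 0%R) \max ((cst 1%R) \- (f2 \* ((cst 1%R \* f1) \+ cst b)))).
  apply: measurable_maxr => //; apply: measurable_funB => //.
  by apply: measurable_funM => //; apply: measurable_funD => //; exact: measurable_funM.
by [].
Qed.

Lemma hinge_ge0 (w b : R) z : 0 <= hinge w b z.
Proof. by rewrite le_max lexx. Qed.

Lemma hinge_lipschitz1 (z : R * R) : `|z.2| = 1 -> lipschitz1 (fun b => hinge 1 b z).
Proof.
move=> z2 x y; rewrite /hinge !mul1r.
apply: (le_trans (max0_lipschitz1 (1 - z.2 * (z.1 + x)) _)); rewrite lerD2l.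
have -> : 1 - z.2 * (z.1 + x) - (1 - z.2 * (z.1 + y)) = z.2 * (y - x) by ring.
by rewrite normrM z2 mul1r distrC.
Qed.

Lemma hinge_convex (z : R * R) : convex_fun (fun b => hinge 1 b z).
Proof.
move=> x y t t01; rewrite /hinge !mul1r.
have -> : 1 - z.2 * (z.1 + (t * x + (1 - t) * y)) =
          t * (1 - z.2 * (z.1 + x)) + (1 - t) * (1 - z.2 * (z.1 + y)) by ring.
exact: max0_convex.
Qed.

End hinge_risk.

Section expectation.
Context {R : realType} d (T : measurableType d) (P : probability T R) (h : R -> T -> R).
Hypotheses (h_ge0 : forall b x, 0 <= h b x) (h_meas : forall b, measurable_fun setT (h b))
  (h_lip : forall x, lipschitz1 (h ^~ x)) (h_cvx : forall x, convex_fun (h ^~ x)).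

Let mh b : measurable_fun setT (fun x => (h b x)%:E).
Proof. exact/measurable_EFinP. Qed.

Let h_ge0E b x : setT x -> (0 <= (h b x)%:E)%E.
Proof. by rewrite lee_fin. Qed.

Lemma integral_lipschitz1 b b' :
  (\int[P]_x (h b' x)%:E <= \int[P]_x (h b x)%:E + `|b - b'|%:E)%E.
Proof.
apply: (@le_trans _ _ (\int[P]_x ((h b x)%:E + `|b - b'|%:E))%E).
  apply: ge0_le_integral => //; first exact: h_ge0E.
    exact: emeasurable_funD (mh b) (measurable_cst _).
  by move=> x _; rewrite -EFinD lee_fin; apply: h_lip.
rewrite ge0_integralD //; last by move=> x _; rewrite lee_fin.
rewrite integral_cst // leeD2l // muleC gee_pMl // ?probability_le1 //.
by rewrite ge0_fin_numE ?measure_ge0 // (le_lt_trans (probability_le1 _ _)) ?ltry.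
Qed.

Lemma integral_convex b1 b2 t : 0 <= t <= 1 ->
  (\int[P]_x (h (t * b1 + (1 - t) * b2) x)%:E <=
   t%:E * \int[P]_x (h b1 x)%:E + (1 - t)%:E * \int[P]_x (h b2 x)%:E)%E.
Proof.
move=> t01; have /andP[t0 t1] := t01; have t1' : 0 <= 1 - t by rewrite subr_ge0.
apply: (@le_trans _ _ (\int[P]_x (t%:E * (h b1 x)%:E + (1 - t)%:E * (h b2 x)%:E))%E).
  apply: ge0_le_integral => //; first exact: h_ge0E.
    exact: emeasurable_funD (emeasurable_funM (measurable_cst _) (mh b1))
                            (emeasurable_funM (measurable_cst _) (mh b2)).
  by move=> x _; rewrite -!EFinM -EFinD lee_fin; exact: h_cvx.
rewrite ge0_integralD //.
- by rewrite !ge0_integralZl ?lee_fin //; exact: h_ge0E.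
- by move=> x _; rewrite -EFinM lee_fin mulr_ge0.
- exact: emeasurable_funM (measurable_cst _) (mh b1).
- by move=> x _; rewrite -EFinM lee_fin mulr_ge0.
- exact: emeasurable_funM (measurable_cst _) (mh b2).
Qed.

(* Finiteness at a single [b] propagates to every [b] by the Lipschitz bound. *)
Lemma integral_infinite_or_finite :
  (forall b, \int[P]_x (h b x)%:E = +oo)%E \/
  exists f, nonneg_convex_lipschitz1 f /\ forall b, (\int[P]_x (h b x)%:E)%E = (f b)%:E.
Proof.
have I0 b : (0 <= \int[P]_x (h b x)%:E)%E by apply: integral_ge0 => x _; exact: h_ge0E.
have [I0oo|I0fin] := eqVneq (\int[P]_x (h 0 x)%:E)%E +oo%E.
  left => b; have := integral_lipschitz1 b 0; rewrite I0oo leye_eq.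
  by move: (I0 b); case: (\int[P]_x (h b x)%:E)%E.
have fin b : (\int[P]_x (h b x)%:E)%E \is a fin_num.
  have fin0 : (\int[P]_x (h 0 x)%:E)%E \is a fin_num by rewrite ge0_fin_numE // ltey.
  rewrite ge0_fin_numE //; apply: (le_lt_trans (integral_lipschitz1 0 b)).
  by rewrite -(fineK fin0) -EFinD ltry.
right; exists (fun b => fine (\int[P]_x (h b x)%:E)%E); split; last by move=> b; rewrite fineK.
split => [b|x y|x y t t01]; first by rewrite -lee_fin fineK.
  by rewrite -lee_fin EFinD !fineK //; exact: integral_lipschitz1.
by rewrite -lee_fin EFinD !EFinM !fineK //; exact: integral_convex.
Qed.

End expectation.

Lemma Lmix_infinite_or_finite {R : realType} (p g1 g2 s1 s2 : R) : 0 < p < 1 ->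
  (forall b, Lmix p g1 g2 s1 s2 1 b = +oo%E) \/
  exists a, nonneg_convex_lipschitz1 a /\ forall b, Lmix p g1 g2 s1 s2 1 b = (a b)%:E.
Proof.
move=> /andP[p0 p1]; have p1' : 0 < 1 - p by rewrite subr_gt0.
have label_risk (P : probability (measurableTypeR R) R) (y : R) : `|y| = 1 ->
    (forall b, \int[P]_x (hinge 1 b (x, y))%:E = +oo)%E \/
    exists f, nonneg_convex_lipschitz1 f /\
      forall b, (\int[P]_x (hinge 1 b (x, y))%:E)%E = (f b)%:E.
  move=> y1; apply: integral_infinite_or_finite => [b x|b|x|x].
  - exact: hinge_ge0.
  - exact: (@measurable_hinge R _ (measurableTypeR R) id (cst y) b
                              (@measurable_id _ _ setT) (measurable_cst y)).
  - exact: (@hinge_lipschitz1 R (x, y) y1).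
  - exact: (hinge_convex (x, y)).
have risk_ge0 (P : probability (measurableTypeR R) R) y b :
    (0 <= \int[P]_x (hinge 1 b (x, y))%:E)%E.
  by apply: integral_ge0 => x _; rewrite lee_fin hinge_ge0.
have term_neqNy (q : R) (P : probability (measurableTypeR R) R) y b : 0 < q ->
    (q%:E * \int[P]_x (hinge 1 b (x, y))%:E)%E != -oo%E.
  by move=> q0; rewrite gt_eqF // (lt_le_trans ltNy0) // mule_ge0 // lee_fin ltW.
have [inf1|[f1 [f1_ok f1E]]] := label_risk (normal_prob g1 s1) (-1) (normrN1 _).
  by left => b; rewrite /Lmix inf1 mulry gtr0_sg // mul1e addye // term_neqNy.
have [inf2|[f2 [f2_ok f2E]]] := label_risk (normal_prob g2 s2) 1 (normr1 _).
  by left => b; rewrite /Lmix inf2 mulry gtr0_sg // mul1e addey // term_neqNy.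
right; exists (fun b => p * f1 b + (1 - p) * f2 b); split.
  by apply: nonneg_convex_lipschitz1_conv => //; rewrite ltW // ltW.
by move=> b; rewrite /Lmix f1E f2E -!EFinM -EFinD.
Qed.

Section two_point_prob.
Context {R : realType} (u al : R) (al_ge0 : 0 <= al) (al_le1 : 0 <= 1 - al).

Definition two_point_prob : set (R * R)%type -> \bar R :=
  measure_add (mscale (NngNum al_ge0) \d_((- u, 1) : R * R))
              (mscale (NngNum al_le1) \d_((u, -1) : R * R)).

HB.instance Definition _ := Measure.on two_point_prob.

Lemma two_point_probT : two_point_prob setT = 1%E.
Proof.
rewrite /two_point_prob measure_addE /= /mscale /= !diracE !in_setT !mule1 -EFinD.
by rewrite addrC subrK.
Qed.

HB.instance Definition _ :=
  Measure_isProbability.Build _ _ _ two_point_prob two_point_probT.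

Lemma two_point_probE A : two_point_prob A =
  (al%:E * \d_((- u, 1)%R : R * R) A + (1 - al)%:E * \d_((u, -1)%R : R * R) A)%E.
Proof. by rewrite /two_point_prob measure_addE. Qed.

Lemma two_point_prob_is_nu : is_nu u al two_point_prob.
Proof. by move=> A _; exact: two_point_probE. Qed.

Lemma integral_two_point_prob (f : R * R -> R) : (forall z, 0 <= f z) ->
  measurable_fun setT f ->
  (\int[two_point_prob]_z (f z)%:E = (al * f (- u, 1) + (1 - al) * f (u, -1))%:E)%E.
Proof.
move=> f0 mf; have mfE : measurable_fun setT (fun z => (f z)%:E) by exact/measurable_EFinP.
rewrite ge0_integral_measure_add //; last by move=> z _; rewrite lee_fin.
rewrite !ge0_integral_mscale //; try by move=> z _; rewrite lee_fin.
by rewrite !integral_dirac // !diracT !mul1e -!EFinM -EFinD.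
Qed.

Lemma Lmu_two_point_prob b : Lmu two_point_prob 1 b = (two_point_loss (1 + u) al b)%:E.
Proof.
rewrite /Lmu integral_two_point_prob => [|z|].
- rewrite /hinge /two_point_loss /=.
  by congr ((_ * Num.max 0 _ + _ * Num.max 0 _)%:E); ring.
- exact: hinge_ge0.
- exact: (@measurable_hinge R _ _ fst snd b measurable_fst measurable_snd).
Qed.

End two_point_prob.

Lemma integral_le_on_cover {R : realType} d (T : measurableType d)
    (mu : probability T R) (A B : set T) (f : T -> R) (cA cB : R) :
  measurable A -> measurable B -> mu (A `|` B) = 1%E -> 0 <= cA -> 0 <= cB ->
  (forall z, 0 <= f z) -> measurable_fun setT f ->
  (forall z, A z -> f z <= cA) -> (forall z, B z -> f z <= cB) ->
  (\int[mu]_z (f z)%:E <= cA%:E * mu A + cB%:E * mu B)%E.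
Proof.
move=> mA mB AB1 cA0 cB0 f0 mf fA fB.
have mIA : measurable_fun setT (fun z => (\1_A z : R)%:E).
  by apply/measurable_EFinP; exact: measurable_indic.
have mIB : measurable_fun setT (fun z => (\1_B z : R)%:E).
  by apply/measurable_EFinP; exact: measurable_indic.
have IA0 z : (0 <= \1_A z :> R) by rewrite indicE.
have IB0 z : (0 <= \1_B z :> R) by rewrite indicE.
apply: (@le_trans _ _ (\int[mu]_z (cA%:E * (\1_A z)%:E + cB%:E * (\1_B z)%:E))%E).
  apply: ae_ge0_le_integral => //.
  - by move=> z _; rewrite lee_fin.
  - exact/measurable_EFinP.
  - by move=> z _; rewrite -!EFinM -EFinD lee_fin addr_ge0 // mulr_ge0.
  - exact: emeasurable_funD (emeasurable_funM (measurable_cst _) mIA)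
                            (emeasurable_funM (measurable_cst _) mIB).
  - exists (~` (A `|` B)); split; first exact/measurableC/measurableU.
      by have := probability_setC mu (measurableU _ _ mA mB); rewrite AB1 subee.
    move=> z /= fz ABz; apply: fz => _; rewrite -!EFinM -EFinD lee_fin.
    case: ABz => [zA|zB].
    + have := fA z zA; have := mulr_ge0 cB0 (IB0 z).
      by rewrite [\1_A z]indicE mem_set //= mulr1; lra.
    + have := fB z zB; have := mulr_ge0 cA0 (IA0 z).
      by rewrite [\1_B z]indicE mem_set //= mulr1; lra.
rewrite ge0_integralD //.
- by rewrite !ge0_integralZl ?lee_fin // ?integral_indic ?setIT.
- by move=> z _; rewrite -EFinM lee_fin mulr_ge0.
- exact: emeasurable_funM (measurable_cst _) mIA.
- by move=> z _; rewrite -EFinM lee_fin mulr_ge0.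
- exact: emeasurable_funM (measurable_cst _) mIB.
Qed.

Lemma Lmu_inQ_le {R : realType} (u : R) (mu : probability (R * R)%type R) :
  inQ u mu -> exists p, 0 <= p <= 1 /\
    forall b, (Lmu mu 1 b <= (two_point_loss (1 + u) p b)%:E)%E.
Proof.
move=> mu1.
pose S (y : R) : set (R * R) := [set` `[- u, u]] `*` [set y].
have mS y : measurable (S y).
  by apply: measurableX; [exact: measurable_itv | exact: measurable_set1].
have S_cover : mu (S 1 `|` S (-1)) = 1%E.
  rewrite -mu1; congr (mu _); apply/seteqP; split => -[x y] /=.
    by case=> -[/= + ->]; rewrite in_itv /= => hx; split => //; [right|left].
  by move=> [hx [->|->]]; [right|left]; split => //=; rewrite in_itv.
have S_disj : S 1 `&` S (-1) = set0.
  apply/seteqP; split => -[x y] //= [[_ /= ->] [_ /= /eqP]].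
  by rewrite -subr_eq0 opprK -mulr2n pnatr_eq0.
have S_fin y : mu (S y) \is a fin_num.
  by rewrite ge0_fin_numE // (le_lt_trans (probability_le1 _ (mS y))) // ltry.
have S_sum : (mu (S 1%R) + mu (S (-1)%R) = 1)%E by rewrite -measureU.
exists (fine (mu (S 1))).
have mSm : mu (S (-1)) = (1 - fine (mu (S 1)))%:E.
  by rewrite EFinB fineK // -S_sum addeAC subee // add0e.
split.
  by rewrite -!lee_fin fineK // measure_ge0 /= probability_le1.
move=> b.
have max0_ge0 (x : R) : 0 <= Num.max 0 x by rewrite le_max lexx.
have hinge1 z : S 1 z -> hinge 1 b z <= Num.max 0 (1 + u - b).
  move: z => [x y] [/= + ->]; rewrite in_itv /= => /andP[hx _].
  have h : 1 - 1 * (1 * x + b) <= 1 + u - b by lra.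
  exact: le_max2 (lexx 0) h.
have hingeN1 z : S (-1) z -> hinge 1 b z <= Num.max 0 (1 + u + b).
  move: z => [x y] [/= + ->]; rewrite in_itv /= => /andP[_ hx].
  have h : 1 - -1 * (1 * x + b) <= 1 + u + b by lra.
  exact: le_max2 (lexx 0) h.
have := integral_le_on_cover (mS 1) (mS (-1)) S_cover (max0_ge0 _) (max0_ge0 _)
  (hinge_ge0 1 b) (@measurable_hinge R _ _ fst snd b measurable_fst measurable_snd)
  hinge1 hingeN1.
rewrite -(fineK (S_fin 1)) mSm -!EFinM -EFinD /Lmu => /le_trans; apply.
by rewrite lee_fin /two_point_loss [_ * fine _]mulrC [_ * (1 - _)]mulrC.
Qed.

Lemma exists_two_point_prob {R : realType} (u al : R) : 0 <= al <= 1 ->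
  exists nu : probability (R * R)%type R, is_nu u al nu /\
    forall b, Lmu nu 1 b = (two_point_loss (1 + u) al b)%:E.
Proof.
move=> /andP[al0 al1]; have al1' : 0 <= 1 - al by rewrite subr_ge0.
exists (two_point_prob u al0 al1'); split; first exact: two_point_prob_is_nu.
exact: Lmu_two_point_prob.
Qed.

Lemma Jobj_pinfty {R : realType} (g1 g2 s eps : R) mu b : 0 < eps ->
  Lmix (2^-1) g1 g2 s s 1 b = +oo%E -> Jobj g1 g2 s eps mu b = +oo%E.
Proof.
move=> eps_gt0 mix_oo.
have Lmu_ge0 : (0 <= Lmu mu 1 b)%E by apply: integral_ge0 => z _; rewrite lee_fin hinge_ge0.
by rewrite /Jobj mix_oo addye // gt_eqF // (lt_le_trans ltNy0) // mule_ge0 // lee_fin ltW.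
Qed.

Theorem mainTheorem5 (R : realType) (g1 g2 s u eps : R) :
  0 < s -> 0 < u -> `|g1 + g2| <= 2 * u -> 0 < eps ->
  exists alpha : R, 0 <= alpha <= 1 /\
    exists nu : probability (R * R)%type R, is_nu u alpha nu /\
    exists bnu : R, is_argmin (Jobj g1 g2 s eps nu) bnu /\
    forall mu : probability (R * R)%type R, inQ u mu ->
      forall b : R, is_argmin (Jobj g1 g2 s eps mu) b ->
        (Jobj g1 g2 s eps mu b <= Jobj g1 g2 s eps nu bnu)%E.
Proof.
move=> _ u_gt0 _ eps_gt0.
have half : 0 < (2^-1 : R) < 1 by apply/andP; split; lra.
have [mix_oo|[a [a_ok aE]]] := Lmix_infinite_or_finite g1 g2 s s half.
  have J_oo mu b : Jobj g1 g2 s eps mu b = +oo%E by exact: Jobj_pinfty.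
  have zero01 : 0 <= (0 : R) <= 1 by rewrite lexx ler01.
  have [nu [nu_is _]] := exists_two_point_prob u zero01.
  exists 0; split => //.
  by exists nu; split => //; exists 0; split => [b|mu _ b _]; rewrite !J_oo.
have [al [al01 [bs [bs_min al_max]]]] :=
  two_point_saddle (c := 1 + u) eps_gt0 (addr_ge0 ler01 (ltW u_gt0)) a_ok.
have [nu [nu_is nuE]] := exists_two_point_prob u al01.
have JnuE b : Jobj g1 g2 s eps nu b = (a b + eps * two_point_loss (1 + u) al b)%:E.
  by rewrite /Jobj aE nuE -EFinM -EFinD.
exists al; split => //; exists nu; split => //; exists bs; split.
  by move=> b; rewrite !JnuE lee_fin bs_min.
move=> mu mu_inQ b b_min; apply: le_trans (b_min bs) _.
have [p [p01 mu_le]] := Lmu_inQ_le mu_inQ.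
apply: (@le_trans _ _ ((a bs)%:E + eps%:E * (two_point_loss (1 + u) p bs)%:E)%E).
  by rewrite /Jobj aE leeD2l // lee_wpmul2l // lee_fin ltW.
rewrite JnuE -EFinM -EFinD lee_fin lerD2l.
by apply: ler_wpM2l; [exact: ltW | exact: al_max].
Qed.
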